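(* Let $L$ be the first-order language with equality whose only non-logical symbol is a binary relation symbol $R$. There is a sentence $\varphi$ of $L$ using only the three variables $x,y,z$ such that $\varphi$ is preserved under substructures, but $\varphi$ is not equivalent to any universal formula of $L$ using only the three variables $x,y,z$.
   Context: A formula ''uses only the variables $x,y,z$'' if every variable occurring in it, free or bound, is one of $x,y,z$; variables may be requantified. A universal formula is one built from atomic formulas ($Ruv$ or $u=v$, with $u,v$ variables) and negations of atomic formulas using only conjunction, disjunction and universal quantification. A sentence is preserved under substructures if, whenever it is true in a structure, it is true in every substructure (i.e., in the induced structure on every nonempty subset of the universe). Two formulas are equivalent if they are true in the same structures under the same assignments. *)

(* First-order logic over the language {R} (R binary) with
   equality, restricted to formulas whose variables (free or bound) are among
   x, y, z: this restriction is built into the syntax, since [var] has exactly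
   the three constructors vx, vy, vz (requantification is allowed). *)

Inductive var : Type := vx | vy | vz.

Definition var_eqb (u v : var) : bool :=
  match u, v with
  | vx, vx | vy, vy | vz, vz => true
  | _, _ => false
  end.

Inductive form : Type :=
  | FRel : var -> var -> form
  | FEq  : var -> var -> form
  | FNeg : form -> form
  | FAnd : form -> form -> form
  | FOr  : form -> form -> form
  | FEx  : var -> form -> form
  | FAll : var -> form -> form.

Record structure : Type := Struct {
  dom : Type;
  rel : dom -> dom -> Prop;
  pt  : dom   (* witness of nonemptiness *)
}.

Definition update {D : Type} (e : var -> D) (v : var) (d : D) : var -> D :=
  fun w => if var_eqb v w then d else e w.

Fixpoint sat (M : structure) (e : var -> dom M) (f : form) : Prop :=
  match f with
  | FRel u v => rel M (e u) (e v)
  | FEq u v => e u = e v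
  | FNeg g => ~ sat M e g
  | FAnd g h => sat M e g /\ sat M e h
  | FOr g h => sat M e g \/ sat M e h
  | FEx v g => exists d : dom M, sat M (update e v d) g
  | FAll v g => forall d : dom M, sat M (update e v d) g
  end.

Fixpoint free (w : var) (f : form) : Prop :=
  match f with
  | FRel u v | FEq u v => w = u \/ w = v
  | FNeg g => free w g
  | FAnd g h | FOr g h => free w g \/ free w h
  | FEx v g | FAll v g => w <> v /\ free w g
  end.

Definition sentence (f : form) : Prop := forall w, ~ free w f.

Definition true_in (M : structure) (f : form) : Prop :=
  forall e : var -> dom M, sat M e f.

Definition substructure (M : structure) (S : dom M -> Prop) (d0 : dom M)
  (H : S d0) : structure :=
  {| dom := { d : dom M | S d };
     rel := fun a b => rel M (proj1_sig a) (proj1_sig b);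
     pt := exist S d0 H |}.

Definition preserved_under_substructures (f : form) : Prop :=
  forall (M : structure), true_in M f ->
  forall (S : dom M -> Prop) (d0 : dom M) (H : S d0),
    true_in (substructure M S d0 H) f.

Inductive universal : form -> Prop :=
  | u_rel : forall u v, universal (FRel u v)
  | u_eq : forall u v, universal (FEq u v)
  | u_nrel : forall u v, universal (FNeg (FRel u v))
  | u_neq : forall u v, universal (FNeg (FEq u v))
  | u_and : forall f g, universal f -> universal g -> universal (FAnd f g)
  | u_or : forall f g, universal f -> universal g -> universal (FOr f g)
  | u_all : forall v f, universal f -> universal (FAll v f).

Definition equivalent (f g : form) : Prop :=
  forall (M : structure) (e : var -> dom M), sat M e f <-> sat M e g.

From Stdlib Require Import List Bool Classical ProofIrrelevance.
Import ListNotations.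

(* Call a pair of distinct reflexive points x, y with edges x -> z and y -> z
   (z distinct from both) a "cherry at z".  The sentence is the conjunction of
     Phi1: the two points of a cherry are non-adjacent;
     Phi2: there are no three distinct, pairwise non-adjacent reflexive points;
     Phi3: if x, y is a cherry at z and z -> t, then some reflexive w has
           w -> z and w -> t.
   Phi1 and Phi2 are universal.  Phi3 is not, but under Phi1 and Phi2 the only
   reflexive points with an edge into the apex z of a cherry x, y are x, y, z
   themselves; so the witness w of Phi3 lies in every substructure containing
   the cherry, and the conjunction is preserved under substructures.
   For non-equivalence we exhibit a 4-element structure A violating the
   sentence and a 12-element structure B satisfying it (both checked by
   evaluation), and a winning strategy for the duplicator in the existential
   3-pebble game from A to B (checked by computation); every universal
   3-variable formula true in B is then true in A. *)

Definition FImp (f g : form) : form := FOr (FNeg f) g.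

Definition FNeq (u v : var) : form := FNeg (FEq u v).
Definition FNonadj (u v : var) : form := FAnd (FNeg (FRel u v)) (FNeg (FRel v u)).

Definition FCherry (x y z : var) : form :=
  FAnd (FRel x z) (FAnd (FRel y z) (FAnd (FRel x x) (FAnd (FRel y y)
    (FAnd (FNeq x y) (FAnd (FNeq x z) (FNeq y z)))))).

Definition Phi1 : form :=
  FAll vz (FAll vx (FAll vy (FImp (FCherry vx vy vz) (FNonadj vx vy)))).

Definition Phi2 : form :=
  FNeg (FEx vx (FEx vy (FEx vz
    (FAnd (FRel vx vx) (FAnd (FRel vy vy) (FAnd (FRel vz vz)
    (FAnd (FNeq vx vy) (FAnd (FNeq vy vz) (FAnd (FNeq vx vz)
    (FAnd (FNonadj vx vy) (FAnd (FNonadj vy vz) (FNonadj vx vz)))))))))))).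

(* after the cherry, x is requantified as the target t and y as the witness w *)
Definition Phi3 : form :=
  FAll vz (FAll vx (FAll vy (FImp (FCherry vx vy vz)
    (FAll vx (FImp (FRel vz vx)
      (FEx vy (FAnd (FRel vy vz) (FAnd (FRel vy vy) (FRel vy vx))))))))).

Definition phi0 : form := FAnd Phi1 (FAnd Phi2 Phi3).

Fixpoint freeb (w : var) (f : form) : bool :=
  match f with
  | FRel u v | FEq u v => var_eqb w u || var_eqb w v
  | FNeg g => freeb w g
  | FAnd g h | FOr g h => freeb w g || freeb w h
  | FEx v g | FAll v g => negb (var_eqb w v) && freeb w g
  end.

Lemma var_eqb_true (u v : var) : var_eqb u v = true <-> u = v.
Proof. destruct u, v; simpl; split; congruence. Qed.

Lemma free_freeb (w : var) (f : form) : free w f -> freeb w f = true.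
Proof.
  induction f as [u v|u v|g IH|g IHg h IHh|g IHg h IHh|v g IH|v g IH]; simpl;
    rewrite ?orb_true_iff, ?andb_true_iff, ?negb_true_iff, ?var_eqb_true;
    try tauto.
  all: intros [Hwv Hg]; split; [|auto];
       destruct (var_eqb w v) eqn:E; [apply var_eqb_true in E|]; tauto.
Qed.

Lemma phi0_sentence : sentence phi0.
Proof. intros w H; apply free_freeb in H; destruct w; discriminate H. Qed.

Section Meaning.
Variable M : structure.
Let R := rel M.

Definition cherry (x y z : dom M) : Prop :=
  R x z /\ R y z /\ R x x /\ R y y /\ x <> y /\ x <> z /\ y <> z.

Definition nonadj (x y : dom M) : Prop := ~ R x y /\ ~ R y x.

Definition P1 : Prop := forall x y z, cherry x y z -> nonadj x y.

Definition P2 : Prop := forall x y z, R x x -> R y y -> R z z ->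
  x <> y -> y <> z -> x <> z -> nonadj x y -> nonadj y z -> nonadj x z -> False.

Definition P3 : Prop := forall x y z t, cherry x y z -> R z t ->
  exists w, R w z /\ R w w /\ R w t.

Lemma sat_phi0 (e : var -> dom M) : sat M e phi0 <-> P1 /\ P2 /\ P3.
Proof.
  cbn [sat phi0 Phi1 Phi2 Phi3 FImp FCherry FNeq FNonadj update var_eqb].
  unfold P1, P2, P3; split.
  - intros (H1 & H2 & H3); split; [|split].
    + intros x y z Hc; destruct (H1 z x y); [contradiction|assumption].
    + intros x y z; intros; apply H2; exists x, y, z; tauto.
    + intros x y z t Hc Hzt; destruct (H3 z x y) as [|Ht]; [contradiction|].
      destruct (Ht t); [contradiction|assumption].
  - intros (H1 & H2 & H3); split; [|split].
    + intros z x y; destruct (classic (cherry x y z)) as [Hc|Hc];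
        [right; exact (H1 x y z Hc)|left; exact Hc].
    + intros (x & y & z & Hxyz); apply (H2 x y z); unfold nonadj; tauto.
    + intros z x y; destruct (classic (cherry x y z)) as [Hc|Hc]; [right|left; exact Hc].
      intros t; destruct (classic (R z t)) as [Hzt|Hzt];
        [right; exact (H3 x y z t Hc Hzt)|left; exact Hzt].
Qed.

Lemma cherry_loop_sources (H1 : P1) (H2 : P2) (x y z w : dom M) :
  cherry x y z -> R w z -> R w w -> w = x \/ w = y \/ w = z.
Proof.
  intros Hc Hwz Hww.
  destruct (classic (w = x \/ w = y \/ w = z)) as [|Hnot]; [assumption|exfalso].
  destruct Hc as (Hxz & Hyz & Hxx & Hyy & Hneq_xy & Hneq_xz & Hneq_yz).
  (* x, w and y, w are cherries at z as well, so x, y, w are pairwise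
     non-adjacent, against Phi2 *)
  assert (Hna_xw : nonadj x w) by (apply (H1 x w z); unfold cherry; intuition).
  assert (Hna_yw : nonadj y w) by (apply (H1 y w z); unfold cherry; intuition).
  assert (Hna_xy : nonadj x y) by (apply (H1 x y z); unfold cherry; intuition).
  apply (H2 x y w); intuition.
Qed.
End Meaning.

Lemma sig_val_neq (T : Type) (S : T -> Prop) (a b : {d | S d}) :
  a <> b -> proj1_sig a <> proj1_sig b.
Proof.
  destruct a as [a Ha], b as [b Hb]; simpl; intros Hne Heq; subst.
  apply Hne; f_equal; apply proof_irrelevance.
Qed.

Section Restriction.
Variables (M : structure) (S : dom M -> Prop) (d0 : dom M) (HS : S d0).
Let N := substructure M S d0 HS.

Lemma cherry_restrict (x y z : dom N) :
  cherry N x y z -> cherry M (proj1_sig x) (proj1_sig y) (proj1_sig z).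
Proof.
  intros (? & ? & ? & ? & ? & ? & ?); repeat split; auto; now apply sig_val_neq.
Qed.

Lemma P1_restrict : P1 M -> P1 N.
Proof. intros H1 x y z Hc; exact (H1 _ _ _ (cherry_restrict x y z Hc)). Qed.

Lemma P2_restrict : P2 M -> P2 N.
Proof.
  intros H2 x y z Hx Hy Hz Hxy Hyz Hxz;
    apply (H2 _ _ _ Hx Hy Hz); now apply sig_val_neq.
Qed.

(* the witness provided in M is a point of the cherry, hence lies in N *)
Lemma P3_restrict : P1 M -> P2 M -> P3 M -> P3 N.
Proof.
  intros H1 H2 H3 x y z t Hc Hzt.
  pose proof (cherry_restrict x y z Hc) as HcM.
  destruct (H3 _ _ _ _ HcM Hzt) as (w & Hwz & Hww & Hwt).
  destruct (cherry_loop_sources M H1 H2 _ _ _ w HcM Hwz Hww) as [ -> | [ -> | -> ] ];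
    [exists x|exists y|exists z]; auto.
Qed.
End Restriction.

Lemma phi0_preserved : preserved_under_substructures phi0.
Proof.
  intros M HM S d0 HS e.
  destruct (proj1 (sat_phi0 M _) (HM (fun _ => pt M))) as (H1 & H2 & H3).
  apply sat_phi0; split; [|split].
  - now apply P1_restrict.
  - now apply P2_restrict.
  - now apply P3_restrict.
Qed.

(* A family G of pairs of assignments which preserves atomic and negated atomic
   formulas and has the forth property for every variable (a winning strategy
   for the duplicator in the existential 3-pebble game from MA to MB)
   transfers universal formulas from MB to MA. *)
Section Transfer.
Variables MA MB : structure.
Variable G : (var -> dom MA) -> (var -> dom MB) -> Prop.
Hypothesis G_atoms : forall eA eB, G eA eB -> forall u v,
  (rel MA (eA u) (eA v) <-> rel MB (eB u) (eB v)) /\ (eA u = eA v <-> eB u = eB v).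
Hypothesis G_forth : forall eA eB, G eA eB -> forall v a,
  exists b, G (update eA v a) (update eB v b).

Lemma universal_transfer (psi : form) : universal psi ->
  forall eA eB, G eA eB -> sat MB eB psi -> sat MA eA psi.
Proof.
  induction 1 as [u v|u v|u v|u v|f g _ IHf _ IHg|f g _ IHf _ IHg|v f _ IHf];
    intros eA eB HG; simpl;
    try (destruct (G_atoms eA eB HG u v); tauto).
  - intros [Hf Hg]; eauto.
  - intros [Hf|Hg]; eauto.
  - intros Hall a; destruct (G_forth eA eB HG v a) as [b Hb]; eauto.
Qed.
End Transfer.

Section Finite.
Variable D : Type.
Variable D_eq_dec : forall a b : D, {a = b} + {a <> b}.
Variable relb : D -> D -> bool.
Variable enum : list D.
Hypothesis enum_full : forall d, In d enum.
Variable d0 : D.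

Definition eqb_dec (a b : D) : bool := if D_eq_dec a b then true else false.

Lemma eqb_dec_true (a b : D) : eqb_dec a b = true <-> a = b.
Proof. unfold eqb_dec; destruct (D_eq_dec a b); split; congruence. Qed.

Definition finite_structure : structure := Struct D (fun a b => relb a b = true) d0.

Fixpoint evalf (e : var -> D) (f : form) : bool :=
  match f with
  | FRel u v => relb (e u) (e v)
  | FEq u v => eqb_dec (e u) (e v)
  | FNeg g => negb (evalf e g)
  | FAnd g h => evalf e g && evalf e h
  | FOr g h => evalf e g || evalf e h
  | FEx v g => existsb (fun d => evalf (update e v d) g) enum
  | FAll v g => forallb (fun d => evalf (update e v d) g) enum
  end.

Lemma evalf_sat (f : form) (e : var -> D) :
  sat finite_structure e f <-> evalf e f = true.
Proof.
  revert e; induction f as [u v|u v|g IH|g IHg h IHh|g IHg h IHh|v g IH|v g IH];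
    intros e; simpl.
  - tauto.
  - symmetry; apply eqb_dec_true.
  - rewrite IH, negb_true_iff, not_true_iff_false; tauto.
  - rewrite IHg, IHh, andb_true_iff; tauto.
  - rewrite IHg, IHh, orb_true_iff; tauto.
  - rewrite existsb_exists; split.
    + intros [d Hd]; exists d; split; [apply enum_full|apply IH, Hd].
    + intros [d [_ Hd]]; exists d; apply IH, Hd.
  - rewrite forallb_forall; split.
    + intros H d _; apply IH, H.
    + intros H d; apply IH, H, enum_full.
Qed.
End Finite.

(* A: a cherry ALoop1, ALoop2 at AApex, and an edge AApex -> ATop with no
   reflexive point seeing both AApex and ATop; it violates Phi3. *)
Inductive EA : Type := ALoop1 | ALoop2 | AApex | ATop.

Definition EA_eq_dec (a b : EA) : {a = b} + {a <> b}.
Proof. decide equality. Defined.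

Definition relA (a b : EA) : bool :=
  match a, b with
  | ALoop1, ALoop1 | ALoop2, ALoop2
  | ALoop1, AApex | ALoop2, AApex | AApex, ATop => true
  | _, _ => false
  end.

Definition enumA : list EA := [ALoop1; ALoop2; AApex; ATop].
Lemma enumA_full (a : EA) : In a enumA.
Proof. destruct a; simpl; tauto. Qed.

Definition MA : structure := finite_structure EA relA ALoop1.

(* B: reflexive points BLoop i (i in Z/4), adjacent exactly to BLoop (i+2);
   for each cherry BLoop i, BLoop (i+1) an apex BApex i and a top BTop i, both
   receiving edges from the two loops; and edges BApex i -> BTop (i +- 1).  The
   witness for BApex i -> BTop (i+1) is BLoop (i+1), for BTop (i-1) it is BLoop i. *)
Inductive Z4 : Type := Z0 | Z1 | Z2 | Z3.

Definition Z4_eq_dec (i j : Z4) : {i = j} + {i <> j}.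
Proof. decide equality. Defined.

Definition succ4 (i : Z4) : Z4 :=
  match i with Z0 => Z1 | Z1 => Z2 | Z2 => Z3 | Z3 => Z0 end.

Definition enumZ4 : list Z4 := [Z0; Z1; Z2; Z3].

Inductive EB : Type := BLoop (i : Z4) | BApex (i : Z4) | BTop (i : Z4).

Definition EB_eq_dec (a b : EB) : {a = b} + {a <> b}.
Proof. decide equality; apply Z4_eq_dec. Defined.

Definition eqZ4 : Z4 -> Z4 -> bool := eqb_dec Z4 Z4_eq_dec.

Definition relB (a b : EB) : bool :=
  match a, b with
  | BLoop i, BLoop j => eqZ4 j i || eqZ4 j (succ4 (succ4 i))
  | BLoop i, BApex j | BLoop i, BTop j => eqZ4 i j || eqZ4 i (succ4 j)
  | BApex i, BTop j => eqZ4 j (succ4 i) || eqZ4 i (succ4 j)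
  | _, _ => false
  end.

Definition enumB : list EB := map BLoop enumZ4 ++ map BApex enumZ4 ++ map BTop enumZ4.
Lemma enumB_full (b : EB) : In b enumB.
Proof. destruct b as [i|i|i]; destruct i; simpl; tauto. Qed.

Definition MB : structure := finite_structure EB relB (BLoop Z0).

Lemma MA_not_phi0 (e : var -> EA) : ~ sat MA e phi0.
Proof.
  unfold MA; rewrite (evalf_sat EA EA_eq_dec relA enumA enumA_full).
  vm_compute; discriminate.
Qed.

Lemma MB_phi0 (e : var -> EB) : sat MB e phi0.
Proof.
  unfold MB; rewrite (evalf_sat EB EB_eq_dec relB enumB enumB_full).
  vm_compute; reflexivity.
Qed.

(* Pebbled pairs may only match AApex with an apex and ATop with a top of B;
   these restrictions make the family of partial isomorphisms closed under
   extension. *)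
Definition allowed (a : EA) (b : EB) : bool :=
  match a, b with
  | AApex, BApex _ | ATop, BTop _ => true
  | AApex, _ | ATop, _ => false
  | _, _ => true
  end.

Definition compatible (p q : EA * EB) : bool :=
  let (a, b) := p in let (a', b') := q in
  allowed a b && Bool.eqb (relA a a') (relB b b')
  && Bool.eqb (eqb_dec EA EA_eq_dec a a') (eqb_dec EB EB_eq_dec b b').

Definition partial_iso (ps : list (EA * EB)) : bool :=
  forallb (fun p => forallb (compatible p) ps) ps.

Lemma partial_iso_spec (ps : list (EA * EB)) :
  partial_iso ps = true <-> forall p q, In p ps -> In q ps -> compatible p q = true.
Proof.
  unfold partial_iso; rewrite forallb_forall; split.
  - intros H p q Hp; apply forallb_forall, H, Hp.
  - intros H p Hp; apply forallb_forall; auto.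
Qed.

Lemma partial_iso_incl (ps qs : list (EA * EB)) :
  incl ps qs -> partial_iso qs = true -> partial_iso ps = true.
Proof. rewrite !partial_iso_spec; intros Hincl H p q Hp Hq; auto. Qed.

Definition extension_property : bool :=
  forallb (fun p1 => forallb (fun p2 =>
    negb (partial_iso [p1; p2]) || forallb (fun a =>
      existsb (fun b => partial_iso [(a, b); p1; p2]) enumB) enumA)
    (list_prod enumA enumB)) (list_prod enumA enumB).

Lemma extension_property_true : extension_property = true.
Proof. vm_compute; reflexivity. Qed.

Lemma extend (p1 p2 : EA * EB) (a : EA) :
  partial_iso [p1; p2] = true -> exists b, partial_iso [(a, b); p1; p2] = true.
Proof.
  intros H; pose proof extension_property_true as E; unfold extension_property in E.
  assert (Hp : forall p, In p (list_prod enumA enumB))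
    by (intros [a' b']; apply in_prod; [apply enumA_full|apply enumB_full]).
  rewrite forallb_forall in E; specialize (E p1 (Hp p1)).
  rewrite forallb_forall in E; specialize (E p2 (Hp p2)).
  rewrite H in E; cbn [negb orb] in E.
  rewrite forallb_forall in E; specialize (E a (enumA_full a)).
  apply existsb_exists in E as [b [_ Hb]]; eauto.
Qed.

Definition pebbles (eA : var -> EA) (eB : var -> EB) : list (EA * EB) :=
  [(eA vx, eB vx); (eA vy, eB vy); (eA vz, eB vz)].

Definition strategy (eA : var -> dom MA) (eB : var -> dom MB) : Prop :=
  partial_iso (pebbles eA eB) = true.

Lemma strategy_atoms (eA : var -> dom MA) (eB : var -> dom MB) :
  strategy eA eB -> forall u v,
  (rel MA (eA u) (eA v) <-> rel MB (eB u) (eB v)) /\ (eA u = eA v <-> eB u = eB v).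
Proof.
  unfold strategy; rewrite partial_iso_spec; intros H u v.
  assert (Hin : forall w, In (eA w, eB w) (pebbles eA eB))
    by (destruct w; simpl; tauto).
  specialize (H _ _ (Hin u) (Hin v)); simpl in H.
  apply andb_true_iff in H as [H Heq]; apply andb_true_iff in H as [_ Hrel].
  apply Bool.eqb_prop in Hrel, Heq; simpl.
  rewrite Hrel, <- (eqb_dec_true EA EA_eq_dec), <- (eqb_dec_true EB EB_eq_dec), Heq.
  tauto.
Qed.

(* moving the pebble on v keeps the other two pebbled pairs, which extend *)
Lemma strategy_forth (eA : var -> dom MA) (eB : var -> dom MB) :
  strategy eA eB -> forall v a, exists b, strategy (update eA v a) (update eB v b).
Proof.
  unfold strategy; intros H v a.
  assert (Hrest : exists p1 p2, incl [p1; p2] (pebbles eA eB) /\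
            forall b, incl (pebbles (update eA v a) (update eB v b)) [(a, b); p1; p2]).
  { destruct v;
      [exists (eA vy, eB vy), (eA vz, eB vz)
      |exists (eA vx, eB vx), (eA vz, eB vz)
      |exists (eA vx, eB vx), (eA vy, eB vy)];
      (split; [|intros b]; intros p Hp; cbn in *; tauto). }
  destruct Hrest as (p1 & p2 & Hold & Hnew).
  destruct (extend p1 p2 a (partial_iso_incl _ _ Hold H)) as [b Hb].
  exists b; exact (partial_iso_incl _ _ (Hnew b) Hb).
Qed.

Lemma not_universal : ~ (exists psi : form, universal psi /\ equivalent phi0 psi).
Proof.
  intros [psi [Hpsi Heq]].
  apply (MA_not_phi0 (fun _ => ALoop1)), Heq.
  apply (universal_transfer MA MB strategy strategy_atoms strategy_forth psi Hpsi
           _ (fun _ => BLoop Z0)).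
  -
    vm_compute; reflexivity.
  - apply Heq, MB_phi0.
Qed.

Theorem mainTheorem1 :
  exists phi : form,
    sentence phi /\ preserved_under_substructures phi /\
    ~ (exists psi : form, universal psi /\ equivalent phi psi).
Proof.
  exists phi0; split; [|split].
  - exact phi0_sentence.
  - exact phi0_preserved.
  - exact not_universal.
Qed.
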